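(* Consider the setting described in the context, with $\rho>0$, $\gamma>0$, symmetric positive semidefinite $P_i,Q_i\in\mathbb{R}^{n\times n}$, and let $\bm{u}^k=(\check{\bm{W}}^k,\hat{\bm{W}}^k,\lambda^k)$ be the sequence generated by the algorithm and $\bm{u}^*=(\check{\bm{W}}^*,\hat{\bm{W}}^*,\lambda^* )$ a KKT point of (P1). Then for every $k\ge 1$, $$\|\bm{u}^k-\bm{u}^*\|^2_{\bm{G}}-\|\bm{u}^{k+1}-\bm{u}^*\|^2_{\bm{G}}\ \ge\ \|\bm{u}^k-\bm{u}^{k+1}\|^2_{\bm{M}},$$ where $$\|\bm{u}^k-\bm{u}^{k+1}\|^2_{\bm{M}}=\|\check{\bm{W}}^k-\check{\bm{W}}^{k+1}\|^2_{\bm{G}_1}+\|\hat{\bm{W}}^k-\hat{\bm{W}}^{k+1}\|^2_{\bm{G}_2-\bm{G}_3}+\frac{2-\gamma}{\gamma^2\rho}\|\lambda^k-\lambda^{k+1}\|^2+\frac{2}{\gamma}(\lambda^k-\lambda^{k+1})^T\bm{A}(\check{\bm{W}}^k-\check{\bm{W}}^{k+1}).$$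
   Context: Let $\mathcal{G}=(\mathcal{V},\mathcal{E})$ be a connected undirected graph with $\mathcal{V}=\{1,\dots,N\}$, $N\ge 2$, and let $d_i$ be the degree of $i$. Variables are $\check{\bm{w}}_i,\hat{\bm{w}}_i\in\mathbb{R}^n$; write $\check{\bm{W}}=(\check{\bm{w}}_1,\dots,\check{\bm{w}}_N)\in\mathbb{R}^{Nn}$, $\hat{\bm{W}}$ likewise, $\bm{z}_i=(\check{\bm{w}}_i,\hat{\bm{w}}_i)$, $\bm{Z}=(\check{\bm{W}},\hat{\bm{W}})$. The matrix $\bm{A}\in\mathbb{R}^{|\mathcal{E}|n\times Nn}$ has one block row per edge $\{i,j\}$ ($i<j$) with $I_n$ in block column $i$, $-I_n$ in block column $j$ and zeros elsewhere; $A_i$ denotes its $i$-th block column, so $\bm{A}\check{\bm{W}}=\sum_i A_i\check{\bm{w}}_i$, $A_i^TA_i=d_iI_n$, and for $i\ne j$, $A_i^TA_j=-I_n$ if $\{i,j\}\in\mathcal{E}$ and $0$ otherwise. Each $f_i:\mathbb{R}^n\times\mathbb{R}^n\to\mathbb{R}$ is differentiable and jointly convex in $(\check{\bm{w}}_i,\hat{\bm{w}}_i)$, with $\|\nabla f_i(\bm{z}^1)-\nabla f_i(\bm{z}^2)\|\le C_i\|\bm{z}^1-\bm{z}^2\|$ for all $\bm{z}^1,\bm{z}^2$. Let $\mu_1\ge0$, $\mu_2>0$, $F_i(\bm{z}_i)=f_i(\check{\bm{w}}_i,\hat{\bm{w}}_i)+\frac{\mu_1}{2}\|\check{\bm{w}}_i\|^2+\frac{\mu_2}{2}\|\hat{\bm{w}}_i\|^2$,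 $\bm{F}(\bm{Z})=\sum_iF_i(\bm{z}_i)$, and let $m$ be a constant with $0<m\le\mu_2$ (a strong convexity modulus of $\hat{\bm{w}}\mapsto\frac{\mu_2}{2}\|\hat{\bm{w}}\|^2$). Problem (P1): minimize $\bm{F}(\bm{Z})$ subject to $\bm{A}\check{\bm{W}}=0$. A KKT point of (P1) is $(\check{\bm{W}}^*,\hat{\bm{W}}^*,\lambda^* )$ with $\bm{A}\check{\bm{W}}^*=0$, $A_i^T\lambda^*=\nabla_{\check{\bm{w}}_i}F_i(\bm{z}_i^* )$, $\nabla_{\hat{\bm{w}}_i}F_i(\bm{z}_i^* )=0$ for all $i$. Algorithm: with $\mathcal{L}_\rho(\check{\bm{W}},\hat{\bm{W}},\lambda)=\bm{F}(\bm{Z})-\lambda^T\bm{A}\check{\bm{W}}+\frac{\rho}{2}\|\bm{A}\check{\bm{W}}\|^2$, starting from arbitrary $\check{\bm{W}}^0,\hat{\bm{W}}^0,\lambda^0$, for $k=0,1,\dots$: (i) for all $i$ in parallel, $\check{\bm{w}}_i^{k+1}=\arg\min_{\check{\bm{w}}_i}\mathcal{L}_\rho(\check{\bm{w}}_i,\check{\bm{W}}^k_{-i},\hat{\bm{W}}^k,\lambda^k)+\frac12\|\check{\bm{w}}_i-\check{\bm{w}}_i^k\|^2_{P_i}$, where $\check{\bm{W}}^k_{-i}$ are the other blocks at iteration $k$; (ii) $\lambda^{k+1}=\lambda^k-\gamma\rho\bm{A}\check{\bm{W}}^{k+1}$; (iii) for all $i$ in parallel, $\hat{\bm{w}}_i^{k+1}=\arg\min_{\hat{\bm{w}}_i}F_i(\check{\bm{w}}_i^{k+1},\hat{\bm{w}}_i)+\frac12\|\hat{\bm{w}}_i-\hat{\bm{w}}_i^k\|^2_{Q_i}$.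 Notation: $\|x\|_S^2=x^TSx$; $\bm{G}_1=\mathrm{blkdiag}(\rho A_i^TA_i+P_i)_{i}$, $\bm{G}_2=\mathrm{blkdiag}(Q_i)_i$, $\bm{G}_3=\mathrm{blkdiag}\big(\frac{C_i}{m}(C_i+m)I_n\big)_i$, $\bm{G}=\mathrm{blkdiag}(\bm{G}_1,\bm{G}_2,\frac{1}{\gamma\rho}I)$, and $\bm{M}=\begin{bmatrix}\bm{G}_1&0&\frac1\gamma\bm{A}^T\\0&\bm{G}_2-\bm{G}_3&0\\\frac1\gamma\bm{A}&0&\frac{2-\gamma}{\gamma^2\rho}I\end{bmatrix}$. *)

From HB Require Import structures.
From mathcomp Require Import all_boot all_order all_algebra.
From mathcomp Require Import all_classical all_reals all_analysis.
Unset Implicit Arguments. Unset Printing Implicit Defensive.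
Import Order.TTheory GRing.Theory Num.Theory.
Import numFieldNormedType.Exports.
Local Open Scope ring_scope.

Section Defs.
Variables (R : realType) (N n : nat).

Definition dotv (x y : 'cV[R]_n) : R := (x^T *m y) 0 0.
Definition sqn (x : 'cV[R]_n) : R := dotv x x.
Definition qform (S : 'M[R]_n) (x : 'cV[R]_n) : R := (x^T *m S *m x) 0 0.

Definition simple_connected_graph (adj : rel 'I_N) : Prop :=
  [/\ symmetric adj, irreflexive adj & forall i j, connect adj i j].

(** Edges {i,j} with i < j: the block rows of the matrix A. *)
Definition edge (adj : rel 'I_N) :=
  {e : 'I_N * 'I_N | ((val e.1 < val e.2)%N && adj e.1 e.2)}.

(** The block coefficient of A at (edge e, node i): I_n if i is the smaller
    end, -I_n if i is the larger end, 0 otherwise. *)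
Definition Acoef (adj : rel 'I_N) (e : edge adj) (i : 'I_N) : R :=
  ((fst (val e) == i)%:R - (snd (val e) == i)%:R).

Definition Acol (adj : rel 'I_N) (i : 'I_N) (x : 'cV[R]_n) : edge adj -> 'cV[R]_n :=
  fun e => Acoef adj e i *: x.

Definition Aop (adj : rel 'I_N) (W : 'I_N -> 'cV[R]_n) : edge adj -> 'cV[R]_n :=
  fun e => \sum_(i < N) Acol adj i (W i) e.

Definition AcolT (adj : rel 'I_N) (i : 'I_N) (l : edge adj -> 'cV[R]_n) : 'cV[R]_n :=
  \sum_(e : edge adj) Acoef adj e i *: l e.

Definition dotE (adj : rel 'I_N) (l m : edge adj -> 'cV[R]_n) : R :=
  \sum_(e : edge adj) dotv (l e) (m e).
Definition sqnE (adj : rel 'I_N) (l : edge adj -> 'cV[R]_n) : R := dotE adj l l.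

Definition grad_c (F : 'cV[R]_n * 'cV[R]_n -> R) (z : 'cV[R]_n * 'cV[R]_n)
  : 'cV[R]_n := \col_(j < n) ('d F z (delta_mx j 0, 0)).
Definition grad_h (F : 'cV[R]_n * 'cV[R]_n -> R) (z : 'cV[R]_n * 'cV[R]_n)
  : 'cV[R]_n := \col_(j < n) ('d F z (0, delta_mx j 0)).

Definition norm2 (z : 'cV[R]_n * 'cV[R]_n) : R := Num.sqrt (sqn z.1 + sqn z.2).

Definition jointly_convex (f : 'cV[R]_n * 'cV[R]_n -> R) : Prop :=
  forall (z1 z2 : 'cV[R]_n * 'cV[R]_n) (t : R), 0 <= t -> t <= 1 ->
    f (t *: z1 + (1 - t) *: z2) <= t * f z1 + (1 - t) * f z2.

Definition grad_lipschitz (f : 'cV[R]_n * 'cV[R]_n -> R) (C : R) : Prop :=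
  forall z1 z2 : 'cV[R]_n * 'cV[R]_n,
    norm2 (grad_c f z1 - grad_c f z2, grad_h f z1 - grad_h f z2)
      <= C * norm2 (z1 - z2).

Definition psd_sym (S : 'M[R]_n) : Prop :=
  S^T = S /\ forall x : 'cV[R]_n, 0 <= qform S x.

Definition Fi (f : 'cV[R]_n * 'cV[R]_n -> R) (mu1 mu2 : R)
  (z : 'cV[R]_n * 'cV[R]_n) : R :=
  f z + mu1 / 2 * sqn z.1 + mu2 / 2 * sqn z.2.

Definition Lrho (adj : rel 'I_N) (f : 'I_N -> 'cV[R]_n * 'cV[R]_n -> R)
  (mu1 mu2 rho : R) (Wc Wh : 'I_N -> 'cV[R]_n) (l : edge adj -> 'cV[R]_n) : R :=
  \sum_(i < N) Fi (f i) mu1 mu2 (Wc i, Wh i) - dotE adj l (Aop adj Wc)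
  + rho / 2 * sqnE adj (Aop adj Wc).

Definition upd (W : 'I_N -> 'cV[R]_n) (i : 'I_N) (w : 'cV[R]_n) : 'I_N -> 'cV[R]_n :=
  fun j => if j == i then w else W j.

Definition KKT (adj : rel 'I_N) (f : 'I_N -> 'cV[R]_n * 'cV[R]_n -> R)
  (mu1 mu2 : R) (Wc Wh : 'I_N -> 'cV[R]_n) (l : edge adj -> 'cV[R]_n) : Prop :=
  [/\ Aop adj Wc = (fun _ => 0),
      forall i, AcolT adj i l = grad_c (Fi (f i) mu1 mu2) (Wc i, Wh i)
    & forall i, grad_h (Fi (f i) mu1 mu2) (Wc i, Wh i) = 0].

(** The sequence generated by the algorithm (steps (i)-(iii), each
    argmin realized by a minimizer). *)
Definition algo_seq (adj : rel 'I_N) (f : 'I_N -> 'cV[R]_n * 'cV[R]_n -> R)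
  (mu1 mu2 rho gamma : R) (P Q : 'I_N -> 'M[R]_n)
  (Wc Wh : nat -> 'I_N -> 'cV[R]_n) (l : nat -> edge adj -> 'cV[R]_n) : Prop :=
  forall k : nat,
  [/\ forall i (w : 'cV[R]_n),
        Lrho adj f mu1 mu2 rho (upd (Wc k) i (Wc k.+1 i)) (Wh k) (l k)
          + 1/2 * qform (P i) (Wc k.+1 i - Wc k i)
        <= Lrho adj f mu1 mu2 rho (upd (Wc k) i w) (Wh k) (l k)
          + 1/2 * qform (P i) (w - Wc k i),
      l k.+1 = (fun e => l k e - (gamma * rho) *: Aop adj (Wc k.+1) e)
    & forall i (w : 'cV[R]_n),
        Fi (f i) mu1 mu2 (Wc k.+1 i, Wh k.+1 i) + 1/2 * qform (Q i) (Wh k.+1 i - Wh k i)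
        <= Fi (f i) mu1 mu2 (Wc k.+1 i, w) + 1/2 * qform (Q i) (w - Wh k i)].

(** ||x||^2 for the i-th diagonal block of G_1 = blkdiag(rho A_i^T A_i + P_i). *)
Definition qG1 (adj : rel 'I_N) (rho : R) (P : 'I_N -> 'M[R]_n) (i : 'I_N)
  (x : 'cV[R]_n) : R :=
  dotv x (rho *: AcolT adj i (Acol adj i x) + P i *m x).

(** ||u||_G^2 with G = blkdiag(G_1, G_2, 1/(gamma rho) I). *)
Definition normG (adj : rel 'I_N) (rho gamma : R) (P Q : 'I_N -> 'M[R]_n)
  (Wc Wh : 'I_N -> 'cV[R]_n) (l : edge adj -> 'cV[R]_n) : R :=
  \sum_(i < N) qG1 adj rho P i (Wc i) + \sum_(i < N) qform (Q i) (Wh i)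
  + 1 / (gamma * rho) * sqnE adj l.

Definition normM (adj : rel 'I_N) (rho gamma m : R) (C : 'I_N -> R)
  (P Q : 'I_N -> 'M[R]_n)
  (Wc Wh : 'I_N -> 'cV[R]_n) (l : edge adj -> 'cV[R]_n) : R :=
  \sum_(i < N) qG1 adj rho P i (Wc i)
  + \sum_(i < N) qform (Q i - (C i / m * (C i + m)) *: 1%:M) (Wh i)
  + (2 - gamma) / (gamma ^+ 2 * rho) * sqnE adj l
  + 2 / gamma * dotE adj l (Aop adj Wc).

End Defs.

Arguments dotv {R n}. Arguments sqn {R n}. Arguments qform {R n}.
Arguments simple_connected_graph {N}.
Arguments edge {N}.
Arguments Acoef {R N adj}. Arguments Acol {R N n}. Arguments Aop {R N n}.
Arguments AcolT {R N n}. Arguments dotE {R N n adj}. Arguments sqnE {R N n adj}.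
Arguments grad_c {R n}. Arguments grad_h {R n}. Arguments norm2 {R n}.
Arguments jointly_convex {R n}. Arguments grad_lipschitz {R n}.
Arguments psd_sym {R n}. Arguments Fi {R n}. Arguments Lrho {R N n}.
Arguments upd {R N n}. Arguments KKT {R N n}. Arguments algo_seq {R N n}.
Arguments qG1 {R N n}. Arguments normG {R N n}. Arguments normM {R N n}.

(* Write z_i^k = (w_check_i^k, w_hat_i^k).  At each node, convexity of f_i at the KKT point
   and at (w_check_i^{k+1}, w_hat_i^k), together with the descent lemma for the C_i-Lipschitz
   gradient in the w_hat block, give a three-point inequality; its Lipschitz error term is
   absorbed by Young's inequality into the strong convexity of mu2/2 |.|^2.  The first-order
   conditions of steps (i) and (iii) and the KKT conditions express the gradients through
   P_i, Q_i, A and the multipliers.  Summing over the nodes (using A W_check* = 0) bounds the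
   pairing
     sum_i <grad F_i(z_i* ) - (d_check F_i(w_check_i^{k+1}, w_hat_i^k), d_hat F_i(z_i^{k+1})),
            z_i^{k+1} - z_i*>
   by sum_i (C_i/2 + C_i^2/(4m)) |w_hat_i^{k+1} - w_hat_i^k|^2.  Polarization of the G-norm
   and the multiplier update lambda^{k+1} = lambda^k - gamma rho A W_check^{k+1} show that
   |u^k - u*|_G^2 - |u^{k+1} - u*|_G^2 - |u^k - u^{k+1}|_M^2 is
     sum_i C_i/m (C_i + m) |w_hat_i^{k+1} - w_hat_i^k|^2 - 2 pairing,
   which is nonnegative since C_i/m (C_i + m) >= 2 (C_i/2 + C_i^2/(4m)). *)

From mathcomp Require Import all_boot all_order all_algebra.
From mathcomp Require Import all_classical all_reals all_analysis.
From mathcomp Require Import ring lra.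

Set Implicit Arguments.
Unset Strict Implicit.
Unset Printing Implicit Defensive.

Import Order.TTheory GRing.Theory Num.Theory.
Import numFieldNormedType.Exports.
Local Open Scope ring_scope.

Section InnerProduct.
Context {R : realType} {n : nat}.
Implicit Types (x y z : 'cV[R]_n) (S : 'M[R]_n).

Lemma dotvE x y : dotv x y = \sum_j x j 0 * y j 0.
Proof. by rewrite /dotv mxE; apply: eq_bigr => j _; rewrite mxE. Qed.

Lemma dotvC x y : dotv x y = dotv y x.
Proof. by rewrite !dotvE; apply: eq_bigr => j _; rewrite mulrC. Qed.

Lemma dotvDl x y z : dotv (x + y) z = dotv x z + dotv y z.
Proof. by rewrite !dotvE -big_split; apply: eq_bigr => j _; rewrite mxE mulrDl. Qed.

Lemma dotvDr x y z : dotv x (y + z) = dotv x y + dotv x z.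
Proof. by rewrite dotvC dotvDl !(dotvC x). Qed.

Lemma dotvZl a x y : dotv (a *: x) y = a * dotv x y.
Proof. by rewrite !dotvE mulr_sumr; apply: eq_bigr => j _; rewrite mxE mulrA. Qed.

Lemma dotvZr a x y : dotv x (a *: y) = a * dotv x y.
Proof. by rewrite dotvC dotvZl dotvC. Qed.

Lemma dotvNl x y : dotv (- x) y = - dotv x y.
Proof. by rewrite -scaleN1r dotvZl mulN1r. Qed.

Lemma dotvNr x y : dotv x (- y) = - dotv x y.
Proof. by rewrite dotvC dotvNl dotvC. Qed.

Lemma dotvBl x y z : dotv (x - y) z = dotv x z - dotv y z.
Proof. by rewrite dotvDl dotvNl. Qed.

Lemma dotvBr x y z : dotv x (y - z) = dotv x y - dotv x z.
Proof. by rewrite dotvDr dotvNr. Qed.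

Lemma dotv0l x : dotv 0 x = 0.
Proof. by rewrite -(scale0r 0) dotvZl mul0r. Qed.

Lemma dotv0r x : dotv x 0 = 0.
Proof. by rewrite dotvC dotv0l. Qed.

Lemma dotv_sumr (I : finType) (F : I -> 'cV[R]_n) x :
  dotv x (\sum_i F i) = \sum_i dotv x (F i).
Proof. exact: (big_morph _ (dotvDr x) (dotv0r x)). Qed.

Lemma dotv_delta x j : dotv x (delta_mx j 0) = x j 0.
Proof.
rewrite dotvE (bigD1 j) //= mxE !eqxx mulr1 big1 ?addr0 // => i /negbTE ij.
by rewrite mxE ij mulr0.
Qed.

Lemma sqn_ge0 x : 0 <= sqn x.
Proof. by rewrite /sqn dotvE sumr_ge0 // => j _; rewrite -expr2 sqr_ge0. Qed.

Lemma sqn_eq0 x : (sqn x == 0) = (x == 0).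
Proof.
apply/idP/eqP => [|->]; last by rewrite /sqn dotv0l.
rewrite /sqn dotvE psumr_eq0 => [/allP x0|j _]; last by rewrite -expr2 sqr_ge0.
apply/matrixP => i j; rewrite (ord1 j) mxE.
by have /implyP/(_ isT) := x0 i (mem_index_enum i); rewrite mulf_eq0 orbb => /eqP.
Qed.

Lemma sqnD x y : sqn (x + y) = sqn x + 2 * dotv x y + sqn y.
Proof. by rewrite /sqn !dotvDl !dotvDr (dotvC y x); ring. Qed.

Lemma sqnZ a x : sqn (a *: x) = a ^+ 2 * sqn x.
Proof. by rewrite /sqn dotvZl dotvZr mulrA expr2. Qed.

Lemma sqnN x : sqn (- x) = sqn x.
Proof. by rewrite /sqn dotvNl dotvNr opprK. Qed.

Lemma dotv_Young c x y : 0 < c -> dotv x y <= c * sqn y + sqn x / (4 * c).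
Proof.
move=> c_gt0; rewrite -subr_ge0.
have -> : c * sqn y + sqn x / (4 * c) - dotv x y = c * sqn (y - (2 * c)^-1 *: x).
  rewrite -scaleNr [y + _]addrC sqnD sqnZ dotvZl (dotvC x y) sqrrN.
  by field; rewrite gt_eqF.
by rewrite mulr_ge0 ?sqn_ge0 // ltW.
Qed.

Lemma dotv_CauchySchwarz x y : dotv x y <= Num.sqrt (sqn x) * Num.sqrt (sqn y).
Proof.
have [->|y_neq0] := eqVneq y 0; first by rewrite dotv0r mulr_ge0 ?sqrtr_ge0.
have sqny_gt0 : 0 < sqn y by rewrite lt_def sqn_eq0 y_neq0 sqn_ge0.
suff : dotv x y ^+ 2 <= sqn x * sqn y.
  rewrite -sqrtrM ?sqn_ge0 // -ler_sqrt ?mulr_ge0 ?sqn_ge0 ?sqr_ge0 // sqrtr_sqr.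
  exact: le_trans (ler_norm _).
have := sqn_ge0 (sqn y *: x - dotv x y *: y).
rewrite sqnD sqnZ -scaleNr sqnZ dotvZl dotvZr sqrrN.
have -> : sqn y ^+ 2 * sqn x + 2 * (sqn y * (- dotv x y * dotv x y))
    + dotv x y ^+ 2 * sqn y = sqn y * (sqn x * sqn y - dotv x y ^+ 2) by ring.
by rewrite pmulr_rge0 // subr_ge0.
Qed.

Lemma qformE S x : qform S x = dotv x (S *m x).
Proof. by rewrite /qform /dotv mulmxA. Qed.

Lemma dotv_mulmx_sym S x y : S^T = S -> dotv x (S *m y) = dotv (S *m x) y.
Proof. by move=> S_sym; rewrite /dotv trmx_mul S_sym mulmxA. Qed.

Lemma qformD S x y : S^T = S ->
  qform S (x + y) = qform S x + 2 * dotv (S *m x) y + qform S y.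
Proof.
move=> S_sym; rewrite !qformE mulmxDr !dotvDl !dotvDr (dotv_mulmx_sym x y) //.
by rewrite (dotvC y (S *m x)); ring.
Qed.

Lemma qformZ S a x : qform S (a *: x) = a ^+ 2 * qform S x.
Proof. by rewrite !qformE -scalemxAr dotvZl dotvZr mulrA expr2. Qed.

Lemma qformN S x : qform S (- x) = qform S x.
Proof. by rewrite -scaleN1r qformZ sqrrN expr1n mul1r. Qed.

Lemma qformB S x y : S^T = S ->
  qform S (x - y) = qform S x - 2 * dotv (S *m y) x + qform S y.
Proof. by move=> S_sym; rewrite qformD // qformN dotvNr -dotv_mulmx_sym // (dotvC x) mulrN. Qed.

Lemma qform_subscalar S a x : qform (S - a *: 1%:M) x = qform S x - a * sqn x.
Proof. by rewrite !qformE mulmxBl -scalemxAl mul1mx dotvBr dotvZr. Qed.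

End InnerProduct.

Section Calculus.
Context {R : realType} {n : nat}.
Local Notation V := ('cV[R]_n * 'cV[R]_n)%type.
Implicit Types (f g : V -> R) (z v : V).

Lemma sum_pair (I : finType) (F G : I -> 'cV[R]_n) :
  \sum_i ((F i, G i) : V) = (\sum_i F i, \sum_i G i).
Proof. by elim/big_rec3: _ => // i a b c _ ->. Qed.

Lemma cV_sum_delta (a : 'cV[R]_n) : a = \sum_j a j 0 *: delta_mx j 0.
Proof. by rewrite {1}(matrix_sum_delta a); apply: eq_bigr => j _; rewrite big_ord1. Qed.

Lemma diff_gradE f z v :
  'd f z v = dotv (grad_c f z) v.1 + dotv (grad_h f z) v.2.
Proof.
case: v => a b /=; have -> : ((a, b) : V) = (a, 0) + (0, b).
  by rewrite -[RHS]/((a + 0, 0 + b)) addr0 add0r.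
have -> : ((a, 0) : V) = \sum_j a j 0 *: ((delta_mx j 0, 0) : V).
  by rewrite sum_pair -cV_sum_delta big1 // => j _; rewrite scaler0.
have -> : ((0, b) : V) = \sum_j b j 0 *: ((0, delta_mx j 0) : V).
  by rewrite sum_pair -cV_sum_delta big1 // => j _; rewrite scaler0.
rewrite linearD !linear_sum !dotvE; congr (_ + _); apply: eq_bigr => j _.
  by rewrite linearZ /grad_c mxE mulrC.
by rewrite linearZ /grad_h mxE mulrC.
Qed.

Lemma is_derive_line f z v t : differentiable f (t *: v + z) ->
  is_derive t 1 (fun s : R => f (s *: v + z)) ('d f (t *: v + z) v).
Proof.
move=> df.
have quotE : (fun h : R => h^-1 *: (f ((h *: 1 + t) *: v + z) - f (t *: v + z))) =
    (fun h => h^-1 *: ((f \o shift (t *: v + z)) (h *: v) - f (t *: v + z))).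
  by apply/funext => h /=; rewrite [h *: 1]mulr1 scalerDl addrA.
apply: DeriveDef; first by rewrite /derivable quotE; exact: diff_derivable.
by rewrite -deriveE // /derive quotE.
Qed.

Lemma is_derive_quadratic (c0 a b t : R) :
  is_derive t 1 (fun s : R => c0 + a * s + b * s ^+ 2) (a + b * (2 * t)).
Proof.
have -> : (fun s : R => c0 + a * s + b * s ^+ 2) =
  (cst c0 + a \*: (id : R -> R)) + b \*: ((id : R -> R) ^+ 2) by [].
apply: is_derive_eq.
by rewrite /= add0r expr1 ![_%:A]mulr1 [b *: _]/(b * _).
Qed.

Lemma diff_line_min f z v (a b : R) : (forall w, differentiable f w) ->
  (forall t, f z <= f (t *: v + z) + (a * t + b * t ^+ 2)) -> 'd f z v + a = 0.
Proof.
move=> df zmin.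
pose psi s := f (s *: v + z) + (0 + a * s + b * s ^+ 2).
have psi' (t : R) : is_derive t (1 : R) psi ('d f (t *: v + z) v + (a + b * (2 * t))).
  exact: is_deriveD (is_derive_line (df _)) (is_derive_quadratic _ _ _ _).
have psi_min : is_derive (0 : R) (1 : R) psi 0.
  apply: (@derive1_at_min _ psi (-1) 1) => [|t _||t _].
  - by rewrite (le_trans (lerN10 R)) ?ler01.
  - exact: (@ex_derive _ _ _ _ _ _ _ (psi' t)).
  - by rewrite in_itv /= ltrN10 ltr01.
  - by rewrite /psi scale0r !add0r mulr0 expr0n /= mulr0 addr0 addr0; exact: zmin.
have := @derive_val _ _ _ _ _ _ _ psi_min.
by rewrite (@derive_val _ _ _ _ _ _ _ (psi' 0)) scale0r add0r !mulr0 addr0.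
Qed.

Lemma grad_c_min g z (r : 'cV[R]_n) (q : 'cV[R]_n -> R) :
  (forall w, differentiable g w) ->
  (forall d t, g z <= g (z.1 + t *: d, z.2) + (dotv r d * t + q d * t ^+ 2)) ->
  grad_c g z + r = 0.
Proof.
move=> dg zmin; set u := grad_c g z + r.
have : 'd g z (u, 0) + dotv r u = 0.
  apply: (diff_line_min (b := q u) dg) => t.
  have -> : t *: ((u, 0) : V) + z = (z.1 + t *: u, z.2).
    by apply: injective_projections => /=; rewrite ?scaler0 ?add0r // addrC.
  exact: zmin.
by rewrite diff_gradE dotv0r addr0 -dotvDl => /eqP; rewrite sqn_eq0 => /eqP.
Qed.

Lemma grad_h_min g z (r : 'cV[R]_n) (q : 'cV[R]_n -> R) :
  (forall w, differentiable g w) ->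
  (forall d t, g z <= g (z.1, z.2 + t *: d) + (dotv r d * t + q d * t ^+ 2)) ->
  grad_h g z + r = 0.
Proof.
move=> dg zmin; set u := grad_h g z + r.
have : 'd g z (0, u) + dotv r u = 0.
  apply: (diff_line_min (b := q u) dg) => t.
  have -> : t *: ((0, u) : V) + z = (z.1, z.2 + t *: u).
    by apply: injective_projections => /=; rewrite ?scaler0 ?add0r // addrC.
  exact: zmin.
by rewrite diff_gradE dotv0r add0r -dotvDl => /eqP; rewrite sqn_eq0 => /eqP.
Qed.

Lemma convex_diff_le f x y : jointly_convex f -> differentiable f x ->
  f x + 'd f x (y - x) <= f y.
Proof.
move=> fconv dfx; set v := y - x; pose g s := f (s *: v + x).
have g'0 : is_derive (0 : R) (1 : R) g ('d f x v).
  by have := @is_derive_line f x v 0; rewrite scale0r add0r; exact.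
have gcvg := @ex_derive _ _ _ _ _ _ _ g'0.
rewrite -(@derive_val _ _ _ _ _ _ _ g'0) -lerBrDl ['D_1 g 0]cvg_at_rightE //.
apply: limr_le.
  rewrite -(cvg_at_rightE (fun h : R => h^-1 *: ((g \o shift 0) _ - g 0))) //.
  apply: cvg_trans gcvg; apply: cvg_app => A [e e_gt0 Ae].
  by exists e => // u ue u_gt0; apply: Ae => //; exact/lt0r_neq0.
near=> h.
have h_gt0 : 0 < h by near: h; exists 1 => /=.
have h_le1 : h <= 1.
  near: h; exists 1 => //= u; rewrite /ball_ /= sub0r normrN => /ltW u1 _.
  exact: le_trans (ler_norm u) u1.
rewrite /= /g [h *: 1]mulr1 addr0 scale0r add0r -[_ *: _]/(h^-1 * _).
rewrite ler_pdivrMl // lerBlDr.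
have -> : h *: v + x = h *: y + (1 - h) *: x.
  by rewrite /v scalerBr scalerBl scale1r addrA addrAC.
rewrite (_ : h * (f y - f x) + f x = h * f y + (1 - h) * f x); last by ring.
exact: fconv (ltW h_gt0) h_le1.
Unshelve. all: by end_near.
Qed.

Lemma convex_grad_le f z w : jointly_convex f -> differentiable f z ->
  f z + dotv (grad_c f z) (w.1 - z.1) + dotv (grad_h f z) (w.2 - z.2) <= f w.
Proof. by move=> fconv dfz; have := convex_diff_le w fconv dfz; rewrite diff_gradE addrA. Qed.

Lemma differentiable_fst z : differentiable (fst : V -> 'cV[R]_n) z.
Proof. by apply: linear_differentiable => w; exact: cvg_fst. Qed.

Lemma differentiable_snd z : differentiable (snd : V -> 'cV[R]_n) z.
Proof. by apply: linear_differentiable => w; exact: cvg_snd. Qed.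

Lemma differentiable_sqn (x : 'cV[R]_n) : differentiable (@sqn R n) x.
Proof.
have -> : @sqn R n = \sum_j ((fun y : 'cV[R]_n => y j 0) * (fun y => y j 0)).
  by apply/funext => y; rewrite fct_sumE /sqn dotvE.
by apply: differentiable_sum => j; apply: differentiableM; exact: differentiable_coord.
Qed.

Lemma diff_Fi f mu1 mu2 z v : (forall w, differentiable f w) ->
  'd (Fi f mu1 mu2) z v = 'd f z v + mu1 * dotv z.1 v.1 + mu2 * dotv z.2 v.2.
Proof.
move=> df; pose q (w : V) := mu1 / 2 * sqn w.1 + mu2 / 2 * sqn w.2.
have dq w : differentiable q w.
  apply: differentiableD; apply: differentiableZ; apply: differentiable_comp;
    by [exact: differentiable_fst | exact: differentiable_snd | exact: differentiable_sqn].
have -> : Fi f mu1 mu2 = f + q by apply/funext => w; rewrite /Fi /q /= addrA.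
rewrite diffD // -addrA; congr (_ + _).
pose a := mu1 * dotv z.1 v.1 + mu2 * dotv z.2 v.2.
pose b := mu1 / 2 * sqn v.1 + mu2 / 2 * sqn v.2.
have q_line : (fun s : R => q (s *: v + z)) = (fun s => q z + a * s + b * s ^+ 2).
  apply/funext => s; rewrite /q /a /b /= !sqnD !sqnZ !dotvZl (dotvC v.1) (dotvC v.2).
  by field; rewrite ?pnatr_eq0.
have := @is_derive_line q z v 0; rewrite scale0r add0r q_line => /(_ (dq z)) q'0.
rewrite -(@derive_val _ _ _ _ _ _ _ q'0).
by rewrite (@derive_val _ _ _ _ _ _ _ (is_derive_quadratic (q z) a b 0)) !mulr0 addr0.
Qed.

Lemma grad_c_Fi f mu1 mu2 z : (forall w, differentiable f w) ->
  grad_c (Fi f mu1 mu2) z = grad_c f z + mu1 *: z.1.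
Proof.
move=> df; apply/matrixP => j k; rewrite (ord1 k) !mxE diff_Fi //= dotv_delta.
by rewrite dotv0r mulr0 addr0.
Qed.

Lemma grad_h_Fi f mu1 mu2 z : (forall w, differentiable f w) ->
  grad_h (Fi f mu1 mu2) z = grad_h f z + mu2 *: z.2.
Proof.
move=> df; apply/matrixP => j k; rewrite (ord1 k) !mxE diff_Fi //= dotv_delta.
by rewrite dotv0r mulr0 addr0.
Qed.

End Calculus.

(* In the next two sections the partial gradients are abstract functions: unifying terms
   through the definitions of [grad_c] and [grad_h] (hence of ['d]) is prohibitively slow,
   so the algebra is done before they are instantiated in section [SmoothConvex]. *)
Section Descent.
Local Open Scope classical_set_scope.
Context {R : realType} {n : nat}.
Local Notation V := ('cV[R]_n * 'cV[R]_n)%type.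
Variables (f : V -> R) (gh : V -> 'cV[R]_n) (C : R).
Hypothesis f_diff : forall z, differentiable f z.
Hypothesis diff_sndE : forall z d, 'd f z (0, d) = dotv (gh z) d.
Hypothesis gh_lipschitz : forall x y y',
  Num.sqrt (sqn (gh (x, y) - gh (x, y'))) <= C * Num.sqrt (sqn (y - y')).

Lemma lipschitz_descent x y d :
  f (x, y + d) <= f (x, y) + dotv (gh (x, y)) d + C / 2 * sqn d.
Proof.
set K := dotv _ d; set B := C / 2 * sqn d.
have lineE t : t *: ((0, d) : V) + (x, y) = (x, y + t *: d).
  by apply: injective_projections => /=; rewrite ?scaler0 ?add0r // addrC.
pose phi s := f (s *: ((0, d) : V) + (x, y)) + (0 + (- K) * s + (- B) * s ^+ 2).
have phi' (t : R) : is_derive t (1 : R) phi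
    ('d f (t *: (0, d) + (x, y)) (0, d) + (- K + (- B) * (2 * t))).
  exact: is_deriveD (is_derive_line (f_diff _)) (is_derive_quadratic _ _ _ _).
have phi_cont : {within `[0, 1], continuous phi}.
  apply: derivable_within_continuous => t _.
  exact: (@ex_derive _ _ _ _ _ _ _ (phi' t)).
have [c /[!in_itv] /andP[c_gt0 _]] := MVT ltr01 (fun t _ => phi' t) phi_cont.
rewrite /phi !lineE diff_sndE scale1r scale0r !addr0.
have : dotv (gh (x, y + c *: d) - gh (x, y)) d <= C * c * sqn d.
  apply: le_trans (dotv_CauchySchwarz _ _) _.
  apply: le_trans (ler_wpM2r (sqrtr_ge0 _) (gh_lipschitz _ _ _)) _.
  rewrite addrAC subrr add0r sqnZ sqrtrM ?sqr_ge0 // sqrtr_sqr gtr0_norm //.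
  by rewrite mulrA -(mulrA (C * c)) -expr2 sqr_sqrtr ?sqn_ge0.
rewrite dotvBl -/K /B; lra.
Qed.

End Descent.

Section NodeInequality.
Context {R : realType} {n : nat}.
Local Notation V := ('cV[R]_n * 'cV[R]_n)%type.
Variables (f : V -> R) (gc gh : V -> 'cV[R]_n) (C : R).
Hypothesis f_convex : forall z w,
  f z + dotv (gc z) (w.1 - z.1) + dotv (gh z) (w.2 - z.2) <= f w.
Hypothesis f_descent : forall x y d,
  f (x, y + d) <= f (x, y) + dotv (gh (x, y)) d + C / 2 * sqn d.

Lemma three_point x y y' xs ys :
  dotv (gc (xs, ys) - gc (x, y')) (x - xs) + dotv (gh (xs, ys) - gh (x, y')) (y - ys)
  <= C / 2 * sqn (y - y').
Proof.
have convex_s : f (xs, ys) + dotv (gc (xs, ys)) (x - xs) + dotv (gh (xs, ys)) (y - ys)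
    <= f (x, y) by exact: f_convex (xs, ys) (x, y).
have convex_w : f (x, y') + dotv (gc (x, y')) (xs - x) + dotv (gh (x, y')) (ys - y')
    <= f (xs, ys) by exact: f_convex (x, y') (xs, ys).
have descent : f (x, y)
    <= f (x, y') + dotv (gh (x, y')) (y - y') + C / 2 * sqn (y - y').
  by have := f_descent x y' (y - y'); rewrite subrKC.
rewrite !dotvBr in convex_s convex_w descent.
rewrite !dotvBl !dotvBr; lra.
Qed.

Variables (mu1 mu2 m : R).
Hypothesis gh_lipschitz : forall x y y',
  sqn (gh (x, y) - gh (x, y')) <= C ^+ 2 * sqn (y - y').
Hypotheses (mu1_ge0 : 0 <= mu1) (m_gt0 : 0 < m) (m_le_mu2 : m <= mu2).

Lemma node_ineq x y y' xs ys a r1 r2 :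
  gc (x, y') + mu1 *: x + r1 = 0 -> gh (x, y) + mu2 *: y + r2 = 0 ->
  gc (xs, ys) + mu1 *: xs = a -> gh (xs, ys) + mu2 *: ys = 0 ->
  dotv (a + r1) (x - xs) + dotv r2 (y - ys)
  <= (C / 2 + C ^+ 2 / (4 * m)) * sqn (y - y').
Proof.
move=> opt_c opt_h kkt_c kkt_h; rewrite mulrDl.
have mu2_gt0 : 0 < mu2 := lt_le_trans m_gt0 m_le_mu2.
have lip : sqn (gh (x, y) - gh (x, y')) / (4 * mu2) <= C ^+ 2 / (4 * m) * sqn (y - y').
  rewrite mulrAC; apply: le_trans (ler_wpM2r _ (gh_lipschitz x y y')) _.
    by rewrite invr_ge0 mulr_ge0 // ltW.
  apply: ler_wpM2l; first by rewrite mulr_ge0 ?sqr_ge0 ?sqn_ge0.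
  by rewrite lef_pV2 ?posrE ?mulr_gt0 // ler_pM2l.
have gc_diff : gc (xs, ys) - gc (x, y') = a + r1 + mu1 *: (x - xs).
  rewrite -kkt_c (_ : gc (x, y') = - (mu1 *: x + r1)).
    by apply/matrixP => i j; rewrite !mxE; ring.
  by apply/eqP; rewrite -addr_eq0 addrA opt_c.
have gh_diff : gh (xs, ys) - gh (x, y')
    = r2 + mu2 *: (y - ys) + (gh (x, y) - gh (x, y')).
  rewrite (_ : gh (xs, ys) = - (mu2 *: ys)); last by apply/eqP; rewrite -addr_eq0 kkt_h.
  rewrite (_ : gh (x, y) = - (mu2 *: y + r2)); last by apply/eqP; rewrite -addr_eq0 addrA opt_h.
  by apply/matrixP => i j; rewrite !mxE; ring.
move: (gh (x, y) - gh (x, y')) lip gh_diff => delta lip gh_diff.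
have := three_point x y y' xs ys; rewrite gc_diff gh_diff !dotvDl !dotvZl.
have := dotv_Young (- delta) (y - ys) mu2_gt0; rewrite dotvNl sqnN.
have : 0 <= mu1 * sqn (x - xs) by rewrite mulr_ge0 ?sqn_ge0.
rewrite -/(sqn (x - xs)) -/(sqn (y - ys)); lra.
Qed.

End NodeInequality.

Section SmoothConvex.
Context {R : realType} {n : nat}.
Local Notation V := ('cV[R]_n * 'cV[R]_n)%type.
Variables (f : V -> R) (C : R).
Hypotheses (f_diff : forall z, differentiable f z) (f_lip : grad_lipschitz f C).

Lemma norm2_ge_snd (a b : 'cV[R]_n) : Num.sqrt (sqn b) <= norm2 (a, b).
Proof. by rewrite ler_wsqrtr // lerDr sqn_ge0. Qed.

Lemma norm2_sub_fst (x y y' : 'cV[R]_n) :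
  norm2 ((x, y) - (x, y')) = Num.sqrt (sqn (y - y')).
Proof. by rewrite /norm2 /= subrr [sqn 0]/sqn dotv0l add0r. Qed.

Lemma grad_h_lipschitz x y y' :
  Num.sqrt (sqn (grad_h f (x, y) - grad_h f (x, y'))) <= C * Num.sqrt (sqn (y - y')).
Proof.
rewrite -[X in _ <= _ * X](norm2_sub_fst x).
exact: le_trans (norm2_ge_snd _ _) (f_lip _ _).
Qed.

Lemma grad_lipschitz_descent x y d :
  f (x, y + d) <= f (x, y) + dotv (grad_h f (x, y)) d + C / 2 * sqn d.
Proof.
apply: (lipschitz_descent f_diff) => [z e|x0 y0 y0'].
  by rewrite diff_gradE dotv0r add0r.
exact: grad_h_lipschitz.
Qed.

Lemma grad_h_lipschitz_sqn x y y' :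
  sqn (grad_h f (x, y) - grad_h f (x, y')) <= C ^+ 2 * sqn (y - y').
Proof.
have sqr_le (a b : R) : 0 <= a -> 0 <= b ->
    Num.sqrt a <= C * Num.sqrt b -> a <= C ^+ 2 * b.
  move=> a_ge0 b_ge0 le_ab; rewrite -(sqr_sqrtr a_ge0) -(sqr_sqrtr b_ge0) -exprMn.
  by apply: lerXn2r; rewrite ?nnegrE ?sqrtr_ge0 // (le_trans _ le_ab) ?sqrtr_ge0.
by apply: sqr_le; rewrite ?sqn_ge0 //; exact: grad_h_lipschitz.
Qed.

Lemma grad_node_ineq mu1 mu2 m x y y' xs ys a r1 r2 :
  jointly_convex f -> 0 <= mu1 -> 0 < m -> m <= mu2 ->
  grad_c f (x, y') + mu1 *: x + r1 = 0 -> grad_h f (x, y) + mu2 *: y + r2 = 0 ->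
  grad_c f (xs, ys) + mu1 *: xs = a -> grad_h f (xs, ys) + mu2 *: ys = 0 ->
  dotv (a + r1) (x - xs) + dotv r2 (y - ys)
  <= (C / 2 + C ^+ 2 / (4 * m)) * sqn (y - y').
Proof.
move=> f_conv mu1_ge0 m_gt0 m_le_mu2.
apply: (@node_ineq _ _ f (grad_c f) (grad_h f) C) => // [z w|x0 y0 d|x0 y0 y0'].
- exact: convex_grad_le.
- exact: grad_lipschitz_descent.
- exact: grad_h_lipschitz_sqn.
Qed.

End SmoothConvex.

Section EdgeSpace.
Context {R : realType} {N n : nat} (adj : rel 'I_N).
Local Notation Ev := (edge adj -> 'cV[R]_n).
Implicit Types (l : Ev) (W : 'I_N -> 'cV[R]_n) (x y : 'cV[R]_n).

Lemma dotEC (l1 l2 : Ev) : dotE l1 l2 = dotE l2 l1.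
Proof. by apply: eq_bigr => e _; rewrite dotvC. Qed.

Lemma dotEDl (l1 l2 : Ev) l : dotE (fun e => l1 e + l2 e) l = dotE l1 l + dotE l2 l.
Proof. by rewrite /dotE -big_split; apply: eq_bigr => e _; rewrite dotvDl. Qed.

Lemma dotEDr (l1 l2 : Ev) l : dotE l (fun e => l1 e + l2 e) = dotE l l1 + dotE l l2.
Proof. by rewrite dotEC dotEDl !(dotEC l). Qed.

Lemma dotEZl a (l1 l2 : Ev) : dotE (fun e => a *: l1 e) l2 = a * dotE l1 l2.
Proof. by rewrite /dotE mulr_sumr; apply: eq_bigr => e _; rewrite dotvZl. Qed.

Lemma dotEZr a (l1 l2 : Ev) : dotE l1 (fun e => a *: l2 e) = a * dotE l1 l2.
Proof. by rewrite dotEC dotEZl dotEC. Qed.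

Lemma dotENl (l1 l2 : Ev) : dotE (fun e => - l1 e) l2 = - dotE l1 l2.
Proof. by rewrite /dotE -sumrN; apply: eq_bigr => e _; rewrite dotvNl. Qed.

Lemma dotEBl (l1 l2 : Ev) l : dotE (fun e => l1 e - l2 e) l = dotE l1 l - dotE l2 l.
Proof. by rewrite dotEDl dotENl. Qed.

Lemma dotEBr (l1 l2 : Ev) l : dotE l (fun e => l1 e - l2 e) = dotE l l1 - dotE l l2.
Proof. by rewrite dotEC dotEBl !(dotEC l). Qed.

Lemma dotE_sumr (F : 'I_N -> Ev) l :
  dotE l (fun e => \sum_i F i e) = \sum_i dotE l (F i).
Proof.
rewrite /dotE exchange_big; apply: eq_bigr => e _.
exact: (big_morph _ (dotvDr (l e)) (dotv0r (l e))).
Qed.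

Lemma dotv_AcolT i x l : dotv x (AcolT adj i l) = dotE (Acol adj i x) l.
Proof. by rewrite /AcolT dotv_sumr; apply: eq_bigr => e _; rewrite dotvZr dotvZl. Qed.

Lemma AcolB i x y : Acol adj i (x - y) = (fun e => Acol adj i x e - Acol adj i y e).
Proof. by apply/funext => e; rewrite /Acol scalerBr. Qed.

Lemma AcolZ i a x : Acol adj i (a *: x) = (fun e => a *: Acol adj i x e).
Proof. by apply/funext => e; rewrite /Acol !scalerA mulrC. Qed.

Lemma AopB (W1 W2 : 'I_N -> 'cV[R]_n) :
  Aop adj (fun i => W1 i - W2 i) = (fun e => Aop adj W1 e - Aop adj W2 e).
Proof. by apply/funext => e; rewrite /Aop -sumrB; apply: eq_bigr => i _; rewrite AcolB. Qed.

Lemma dotE_Aopl W l : dotE (Aop adj W) l = \sum_i dotE (Acol adj i (W i)) l.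
Proof. by rewrite dotEC dotE_sumr; apply: eq_bigr => i _; rewrite dotEC. Qed.

Lemma Aop_upd W i x :
  Aop adj (upd W i x) = (fun e => Aop adj W e + Acol adj i (x - W i) e).
Proof.
apply/funext => e; rewrite /Aop (bigD1 i) //= [in RHS](bigD1 i) //= /upd eqxx.
rewrite (eq_bigr (fun j => Acol adj j (W j) e)) => [|j /negbTE -> //].
by rewrite [RHS]addrAC AcolB /= subrKC.
Qed.

Lemma dotE_shift (l1 l2 l : Ev) t :
  dotE l (fun e => l1 e + t *: l2 e) = dotE l l1 + t * dotE l l2.
Proof. by rewrite dotEDr dotEZr. Qed.

Lemma sqnEZ a (l : Ev) : sqnE (fun e => a *: l e) = a ^+ 2 * sqnE l.
Proof. by rewrite /sqnE dotEZl dotEZr mulrA expr2. Qed.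

Lemma sqnE_shift (l1 l2 : Ev) t :
  sqnE (fun e => l1 e + t *: l2 e) = sqnE l1 + 2 * t * dotE l1 l2 + t ^+ 2 * sqnE l2.
Proof. by rewrite /sqnE dotE_shift !dotEDl !dotEZl (dotEC l2); ring. Qed.

End EdgeSpace.

Section Optimality.
Context {R : realType} {N n : nat} (adj : rel 'I_N).
Local Notation V := ('cV[R]_n * 'cV[R]_n)%type.
Local Notation Ev := (edge adj -> 'cV[R]_n).
Variables (f : 'I_N -> V -> R) (mu1 mu2 rho : R).
Implicit Types (W Wh : 'I_N -> 'cV[R]_n) (x d : 'cV[R]_n) (t : R).

Lemma Lrho_upd W Wh (lam : Ev) i w :
  Lrho adj f mu1 mu2 rho (upd W i w) Wh lam =
  Fi (f i) mu1 mu2 (w, Wh i) + \sum_(j < N | j != i) Fi (f j) mu1 mu2 (W j, Wh j)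
  - dotE lam (Aop adj (upd W i w)) + rho / 2 * sqnE (Aop adj (upd W i w)).
Proof.
rewrite /Lrho (bigD1 i) //= {1}/upd eqxx; congr (_ + _ - _ + _).
by apply: eq_bigr => j /negbTE ji; rewrite /upd ji.
Qed.

Lemma Aop_upd_shift W i x d t :
  Aop adj (upd W i (x + t *: d)) = (fun e => Aop adj (upd W i x) e + t *: Acol adj i d e).
Proof.
rewrite !Aop_upd; apply/funext => e; rewrite /Acol.
by apply/matrixP => p q; rewrite !mxE; ring.
Qed.

Lemma step_c_optimality (P : 'I_N -> 'M[R]_n) W Wh (lam : Ev) i x :
  (forall w, differentiable (f i) w) -> (P i)^T = P i ->
  (forall w, Lrho adj f mu1 mu2 rho (upd W i x) Wh lam + 1/2 * qform (P i) (x - W i)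
     <= Lrho adj f mu1 mu2 rho (upd W i w) Wh lam + 1/2 * qform (P i) (w - W i)) ->
  grad_c (f i) (x, Wh i) + mu1 *: x
    + (rho *: AcolT adj i (Aop adj (upd W i x)) - AcolT adj i lam + P i *m (x - W i)) = 0.
Proof.
move=> df P_sym xmin; rewrite -addrA.
pose q d := mu1 / 2 * sqn d + rho / 2 * sqnE (Acol adj i d) + 1 / 2 * qform (P i) d.
apply: (grad_c_min (q := q) df) => d t /=.
have := xmin (x + t *: d).
rewrite !Lrho_upd Aop_upd_shift /Fi /= dotE_shift sqnE_shift (addrAC x).
rewrite (qformD (x - W i)) // qformZ sqnD sqnZ dotvZr dotvZr (dotEC (Aop _ _)) (dotEC lam (Acol _ _ _)).
rewrite /q !dotvDl dotvNl !dotvZl !(dotvC (AcolT _ _ _) d) !dotv_AcolT.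
lra.
Qed.

Lemma step_h_optimality (g : V -> R) (Qi : 'M[R]_n) x y y' :
  (forall w, differentiable g w) -> Qi^T = Qi ->
  (forall w, Fi g mu1 mu2 (x, y) + 1/2 * qform Qi (y - y')
     <= Fi g mu1 mu2 (x, w) + 1/2 * qform Qi (w - y')) ->
  grad_h g (x, y) + mu2 *: y + Qi *m (y - y') = 0.
Proof.
move=> dg Q_sym ymin; rewrite -addrA.
pose q d := mu2 / 2 * sqn d + 1 / 2 * qform Qi d.
apply: (grad_h_min (q := q) dg) => d t /=.
have := ymin (y + t *: d); rewrite /Fi /= (addrAC y) (qformD (y - y')) //.
rewrite qformZ sqnD sqnZ !dotvZr /q dotvDl !dotvZl; lra.
Qed.

End Optimality.

Section Iteration.
Context {R : realType} {N n : nat} (adj : rel 'I_N).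
Local Notation V := ('cV[R]_n * 'cV[R]_n)%type.
Local Notation Ev := (edge adj -> 'cV[R]_n).

(* The polar form u^T (rho A_i^T A_i + P_i) v of [qG1]. *)
Definition formG1 (rho : R) (P : 'I_N -> 'M[R]_n) i (u v : 'cV[R]_n) : R :=
  rho * dotE (Acol adj i u) (Acol adj i v) + dotv (P i *m u) v.

(* The pairing of the header, with the gradients expressed through the optimality and KKT
   conditions; x0, x1, xs stand for W_check^k, W_check^{k+1}, W_check^*, and likewise for
   y (W_hat) and l (lambda). *)
Definition optimality_pairing rho (P Q : 'I_N -> 'M[R]_n)
  (x0 x1 xs y0 y1 ys : 'I_N -> 'cV[R]_n) (l0 ls : Ev) : R :=
  \sum_i formG1 rho P i (x1 i - x0 i) (x1 i - xs i)
  + \sum_i dotv (Q i *m (y1 i - y0 i)) (y1 i - ys i)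
  + dotE (Aop adj x1) (fun e => ls e - l0 e) + rho * dotE (Aop adj x1) (Aop adj x0).

Variables (f : 'I_N -> V -> R) (C : 'I_N -> R) (mu1 mu2 m rho : R).
Variables (P Q : 'I_N -> 'M[R]_n).
Hypotheses (f_diff : forall i z, differentiable (f i) z)
  (f_convex : forall i, jointly_convex (f i)) (f_lip : forall i, grad_lipschitz (f i) (C i)).
Hypotheses (mu1_ge0 : 0 <= mu1) (m_gt0 : 0 < m) (m_le_mu2 : m <= mu2).
Hypotheses (P_sym : forall i, (P i)^T = P i) (Q_sym : forall i, (Q i)^T = Q i).
Variables (x0 x1 xs y0 y1 ys : 'I_N -> 'cV[R]_n) (l0 ls : Ev).
Hypothesis step_c : forall i w,
  Lrho adj f mu1 mu2 rho (upd x0 i (x1 i)) y0 l0 + 1/2 * qform (P i) (x1 i - x0 i)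
  <= Lrho adj f mu1 mu2 rho (upd x0 i w) y0 l0 + 1/2 * qform (P i) (w - x0 i).
Hypothesis step_h : forall i w,
  Fi (f i) mu1 mu2 (x1 i, y1 i) + 1/2 * qform (Q i) (y1 i - y0 i)
  <= Fi (f i) mu1 mu2 (x1 i, w) + 1/2 * qform (Q i) (w - y0 i).
Hypothesis kkt : KKT adj f mu1 mu2 xs ys ls.

Lemma node_iteration_ineq i :
  dotE (Acol adj i (x1 i - xs i)) (fun e => ls e - l0 e)
  + rho * dotE (Acol adj i (x1 i - xs i)) (Aop adj x0)
  + formG1 rho P i (x1 i - x0 i) (x1 i - xs i)
  + dotv (Q i *m (y1 i - y0 i)) (y1 i - ys i)
  <= (C i / 2 + C i ^+ 2 / (4 * m)) * sqn (y1 i - y0 i).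
Proof.
have [_ kkt_c kkt_h] := kkt.
have opt_c := step_c_optimality (f_diff i) (P_sym i) (step_c i).
have opt_h := step_h_optimality (f_diff i) (Q_sym i) (step_h i).
have kkt_ci : grad_c (f i) (xs i, ys i) + mu1 *: xs i = AcolT adj i ls.
  by rewrite (kkt_c i) grad_c_Fi.
have kkt_hi : grad_h (f i) (xs i, ys i) + mu2 *: ys i = 0.
  by rewrite -(kkt_h i) grad_h_Fi.
have := grad_node_ineq (f_diff i) (f_lip i) (f_convex i) mu1_ge0 m_gt0 m_le_mu2
  opt_c opt_h kkt_ci kkt_hi.
rewrite !dotvDl dotvNl dotvZl !(dotvC (AcolT _ _ _)) !dotv_AcolT Aop_upd dotEDr.
rewrite /formG1 dotEBr (dotEC (Acol _ _ (_ - x0 i))); lra.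
Qed.

Lemma iteration_ineq :
  optimality_pairing rho P Q x0 x1 xs y0 y1 ys l0 ls
  <= \sum_i (C i / 2 + C i ^+ 2 / (4 * m)) * sqn (y1 i - y0 i).
Proof.
have [kkt_A _ _] := kkt.
have Ax1 : Aop adj (fun i => x1 i - xs i) = Aop adj x1.
  by rewrite AopB kkt_A; apply/funext => e; rewrite subr0.
apply: le_trans (ler_sum _ (fun i _ => node_iteration_ineq i)).
rewrite 3![in leRHS]big_split /= -mulr_sumr -!dotE_Aopl Ax1 /optimality_pairing; lra.
Qed.

End Iteration.

Section Norms.
Context {R : realType} {N n : nat} (adj : rel 'I_N).
Local Notation Ev := (edge adj -> 'cV[R]_n).
Variables (rho gamma m : R) (C : 'I_N -> R) (P Q : 'I_N -> 'M[R]_n).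
Hypotheses (P_sym : forall i, (P i)^T = P i) (Q_sym : forall i, (Q i)^T = Q i).
Implicit Types (u v : 'cV[R]_n).

Lemma qG1E i u : qG1 adj rho P i u = rho * sqnE (Acol adj i u) + qform (P i) u.
Proof. by rewrite /qG1 dotvDr dotvZr dotv_AcolT qformE. Qed.

Lemma qG1B i u v :
  qG1 adj rho P i (u - v) = qG1 adj rho P i u - 2 * formG1 adj rho P i v u + qG1 adj rho P i v.
Proof.
rewrite !qG1E qformB // /formG1 /sqnE AcolB dotEBl !dotEBr (dotEC (Acol _ _ u)); ring.
Qed.

Lemma qG1N i u : qG1 adj rho P i (- u) = qG1 adj rho P i u.
Proof. by rewrite !qG1E qformN -scaleN1r AcolZ sqnEZ sqrrN expr1n mul1r. Qed.

Variables (x0 x1 xs y0 y1 ys : 'I_N -> 'cV[R]_n) (l0 l1 ls : Ev).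
Hypotheses (rho_gt0 : 0 < rho) (gamma_gt0 : 0 < gamma).
Hypothesis l1E : l1 = (fun e => l0 e - (gamma * rho) *: Aop adj x1 e).

Lemma normG_normM_gap :
  normG adj rho gamma P Q (fun i => x0 i - xs i) (fun i => y0 i - ys i) (fun e => l0 e - ls e)
  - normG adj rho gamma P Q (fun i => x1 i - xs i) (fun i => y1 i - ys i)
      (fun e => l1 e - ls e)
  - normM adj rho gamma m C P Q (fun i => x0 i - x1 i) (fun i => y0 i - y1 i)
      (fun e => l0 e - l1 e)
  = \sum_i C i / m * (C i + m) * sqn (y1 i - y0 i)
    - 2 * optimality_pairing rho P Q x0 x1 xs y0 y1 ys l0 ls.
Proof.
have gap_x : \sum_i qG1 adj rho P i (x0 i - xs i) - \sum_i qG1 adj rho P i (x1 i - xs i)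
    - \sum_i qG1 adj rho P i (x0 i - x1 i)
    = - 2 * \sum_i formG1 adj rho P i (x1 i - x0 i) (x1 i - xs i).
  rewrite -!sumrB mulr_sumr; apply: eq_bigr => i _.
  have -> : x0 i - xs i = (x1 i - xs i) - (x1 i - x0 i).
    by apply/matrixP => p q; rewrite !mxE; ring.
  by rewrite qG1B // -(opprB (x1 i)) qG1N; ring.
have gap_y : \sum_i qform (Q i) (y0 i - ys i) - \sum_i qform (Q i) (y1 i - ys i)
    - \sum_i qform (Q i - (C i / m * (C i + m)) *: 1%:M) (y0 i - y1 i)
    = \sum_i C i / m * (C i + m) * sqn (y1 i - y0 i)
      - 2 * \sum_i dotv (Q i *m (y1 i - y0 i)) (y1 i - ys i).
  rewrite -!sumrB mulr_sumr -sumrB; apply: eq_bigr => i _.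
  have -> : y0 i - ys i = (y1 i - ys i) - (y1 i - y0 i).
    by apply/matrixP => p q; rewrite !mxE; ring.
  by rewrite qformB // qform_subscalar -(opprB (y1 i)) qformN sqnN; ring.
have gap_l : 1 / (gamma * rho) * sqnE (fun e => l0 e - ls e)
    - 1 / (gamma * rho) * sqnE (fun e => l1 e - ls e)
    - ((2 - gamma) / (gamma ^+ 2 * rho) * sqnE (fun e => l0 e - l1 e)
       + 2 / gamma * dotE (fun e => l0 e - l1 e) (Aop adj (fun i => x0 i - x1 i)))
    = - 2 * (dotE (Aop adj x1) (fun e => ls e - l0 e)
             + rho * dotE (Aop adj x1) (Aop adj x0)).
  have -> : (fun e => l1 e - ls e)
      = (fun e => (l0 e - ls e) + (- (gamma * rho)) *: Aop adj x1 e).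
    by rewrite l1E; apply/funext => e; rewrite scaleNr addrAC.
  have -> : (fun e => l0 e - l1 e) = (fun e => (gamma * rho) *: Aop adj x1 e).
    by rewrite l1E; apply/funext => e; rewrite opprB addrC subrK.
  rewrite sqnE_shift sqnEZ dotEZl AopB !dotEBr (dotEC (fun e => l0 e - ls e)) dotEBr.
  by rewrite /sqnE; field; rewrite !gt_eqF.
rewrite /normG /normM /optimality_pairing /=; lra.
Qed.

End Norms.

Lemma lipschitz_coef_le {R : realType} (c m : R) : 0 < m ->
  2 * (c / 2 + c ^+ 2 / (4 * m)) <= c / m * (c + m).
Proof.
move=> m_gt0; rewrite -subr_ge0.
have -> : c / m * (c + m) - 2 * (c / 2 + c ^+ 2 / (4 * m)) = c ^+ 2 / (2 * m).
  by field; rewrite gt_eqF.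
by rewrite divr_ge0 ?sqr_ge0 // mulr_ge0 // ltW.
Qed.

Theorem lemma2 (R : realType) (N n : nat) (adj : rel 'I_N)
  (f : 'I_N -> 'cV[R]_n * 'cV[R]_n -> R) (C : 'I_N -> R)
  (mu1 mu2 m rho gamma : R) (P Q : 'I_N -> 'M[R]_n)
  (Wc Wh : nat -> 'I_N -> 'cV[R]_n) (l : nat -> edge adj -> 'cV[R]_n)
  (Wcs Whs : 'I_N -> 'cV[R]_n) (ls : edge adj -> 'cV[R]_n) :
  (2 <= N)%N ->
  simple_connected_graph adj ->
  (forall i z, differentiable (f i) z) ->
  (forall i, jointly_convex (f i)) ->
  (forall i, grad_lipschitz (f i) (C i)) ->
  0 <= mu1 -> 0 < mu2 -> 0 < m -> m <= mu2 ->
  0 < rho -> 0 < gamma ->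
  (forall i, psd_sym (P i)) -> (forall i, psd_sym (Q i)) ->
  algo_seq adj f mu1 mu2 rho gamma P Q Wc Wh l ->
  KKT adj f mu1 mu2 Wcs Whs ls ->
  forall k : nat, (1 <= k)%N ->
    normG adj rho gamma P Q (fun i => Wc k i - Wcs i) (fun i => Wh k i - Whs i)
      (fun e => l k e - ls e)
    - normG adj rho gamma P Q (fun i => Wc k.+1 i - Wcs i)
        (fun i => Wh k.+1 i - Whs i) (fun e => l k.+1 e - ls e)
    >= normM adj rho gamma m C P Q (fun i => Wc k i - Wc k.+1 i)
         (fun i => Wh k i - Wh k.+1 i) (fun e => l k e - l k.+1 e).
Proof.
move=> _ _ f_diff f_convex f_lip mu1_ge0 _ m_gt0 m_le_mu2 rho_gt0 gamma_gt0 P_psd Q_psd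
  alg kkt k _.
have P_sym i : (P i)^T = P i by case: (P_psd i).
have Q_sym i : (Q i)^T = Q i by case: (Q_psd i).
have [step_c l_next step_h] := alg k.
rewrite -subr_ge0 normG_normM_gap //.
have := iteration_ineq f_diff f_convex f_lip mu1_ge0 m_gt0 m_le_mu2 P_sym Q_sym
  step_c step_h kkt.
have coef_le : 2 * \sum_i (C i / 2 + C i ^+ 2 / (4 * m)) * sqn (Wh k.+1 i - Wh k i)
    <= \sum_i C i / m * (C i + m) * sqn (Wh k.+1 i - Wh k i).
  rewrite mulr_sumr; apply: ler_sum => i _.
  by rewrite mulrA ler_wpM2r ?sqn_ge0 ?lipschitz_coef_le.
lra.
Qed.
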